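(* Let $R$ be a local ring with maximal ideal $\mathfrak{m}$, complete and separated with respect to the $\mathfrak{m}$-adic topology, $\sigma$ a ring endomorphism of $R$ with $\sigma(\mathfrak{m})\subseteq\mathfrak{m}$, and $\delta$ a $\sigma$-derivation with $\delta(R)\subseteq\mathfrak{m}$ and $\delta(\mathfrak{m})\subseteq\mathfrak{m}^2$. Let $A=R[[X;\sigma,\delta]]$. An element $f=\sum f_iX^i\in A$ is a unit in $A$ if and only if its constant term $f_0$ is a unit in $R$. In particular $A$ is a local ring.
   Context: A $\sigma$-derivation is an additive map with $\delta(rs)=\delta(r)s+\sigma(r)\delta(s)$. $R[[X;\sigma,\delta]]$ consists of formal series $\sum_{n\ge0}r_nX^n$ with multiplication determined by $Xr=\sigma(r)X+\delta(r)$. A local ring is one whose non-units form a proper two-sided ideal. *)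

From HB Require Import structures.
From mathcomp Require Import all_boot all_order all_algebra.
Set Implicit Arguments. Unset Strict Implicit. Unset Printing Implicit Defensive.
Import Order.TTheory GRing.Theory.
Local Open Scope ring_scope.

Section SkewSeries.
Variable R : unitRingType.

Definition nonunit (x : R) : Prop := ~ (x \is a GRing.unit).

Definition local_ring : Prop :=
  (1 : R) \is a GRing.unit /\ nonunit 0 /\
  (forall x y, nonunit x -> nonunit y -> nonunit (x + y)) /\
  (forall a x, nonunit x -> nonunit (a * x) /\ nonunit (x * a)).

(* Powers I^n of an ideal I: I^0 = R, I^(n+1) = additive span of I * I^n. *)
Inductive idpow (I : R -> Prop) : nat -> R -> Prop :=
| idpow0 x : idpow I 0 x
| idpow_zero n : idpow I n 0
| idpow_mul n a b : I a -> idpow I n b -> idpow I n.+1 (a * b)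
| idpow_add n x y : idpow I n x -> idpow I n y -> idpow I n (x + y).

Definition adic_lim (I : R -> Prop) (u : nat -> R) (l : R) : Prop :=
  forall k, exists N, forall n, (N <= n)%N -> idpow I k (u n - l).

Definition adic_cauchy (I : R -> Prop) (u : nat -> R) : Prop :=
  forall k, exists N, forall n p, (N <= n)%N -> (N <= p)%N -> idpow I k (u n - u p).

Definition adic_complete (I : R -> Prop) : Prop :=
  forall u, adic_cauchy I u -> exists l, adic_lim I u l.

Definition adic_separated (I : R -> Prop) : Prop :=
  forall x, (forall k, idpow I k x) -> x = 0.

Definition sigma_derivation (s d : R -> R) : Prop :=
  (forall x y, d (x + y) = d x + d y) /\
  (forall x y, d (x * y) = d x * y + s x * d y).

(* xcoef s d i b k = coefficient of X^k in X^i b, using X r = s(r) X + d(r). *)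
Fixpoint xcoef (s d : R -> R) (i : nat) (b : R) (k : nat) : R :=
  match i with
  | 0 => if k == 0%N then b else 0
  | i'.+1 => (if k is k'.+1 then s (xcoef s d i' b k') else 0) + d (xcoef s d i' b k)
  end.

(* Elements of R[[X;s,d]] : coefficient sequences f, f = sum_i f i X^i. *)
Definition mul_psum (s d : R -> R) (f g : nat -> R) (n N : nat) : R :=
  \sum_(i < N) \sum_(j < n.+1) f i * xcoef s d i (g j) (n - j).

(* h = f * g in R[[X;s,d]], coefficients defined as I-adic limits. *)
Definition is_mul (I : R -> Prop) (s d : R -> R) (f g h : nat -> R) : Prop :=
  forall n, adic_lim I (mul_psum s d f g n) (h n).

Definition sone : nat -> R := fun n => if n == 0%N then 1 else 0.
Definition szero : nat -> R := fun _ => 0.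
Definition sadd (f g : nat -> R) : nat -> R := fun n => f n + g n.

Definition sunit (I : R -> Prop) (s d : R -> R) (f : nat -> R) : Prop :=
  exists g, is_mul I s d f g sone /\ is_mul I s d g f sone.

Definition skew_local (I : R -> Prop) (s d : R -> R) : Prop :=
  sunit I s d sone /\ ~ sunit I s d szero /\
  (forall f g, ~ sunit I s d f -> ~ sunit I s d g -> ~ sunit I s d (sadd f g)) /\
  (forall a f h, ~ sunit I s d f -> is_mul I s d a f h -> ~ sunit I s d h) /\
  (forall a f h, ~ sunit I s d f -> is_mul I s d f a h -> ~ sunit I s d h).

End SkewSeries.

From mathcomp Require Import all_boot all_order all_algebra.
From mathcomp Require Import zify.
From Stdlib Require Import FunctionalExtensionality IndefiniteDescription.
Import GRing.Theory.
Local Open Scope ring_scope.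
Set Implicit Arguments. Unset Strict Implicit. Unset Printing Implicit Defensive.

(* Write m for the maximal ideal and A for R[[X; sigma, delta]]. Left multiplication
   by X sends the coefficients v_t to sigma(v_(t-1)) + delta(v_t); as sigma preserves m
   and delta raises the m-adic order by one, X^i v has its t-th coefficient in m^(i-t).
   Hence truncated products converge m-adically, their limits multiply associatively,
   and the constant coefficient of f g is f_0 g_0 modulo m.
   If f_0 is a unit, the Newton step g |-> g + f_0^-1 (1 - f g) raises the (m, X)-adic
   order of the defect 1 - f g by one, so completeness yields a right inverse g; then
   g_0 is a unit too, g has a right inverse h, and f = f (g h) = (f g) h = h.
   Conversely f g = 1 gives f_0 g_0 in 1 + m, so f_0 is a unit as R is local, and
   the locality of A is inherited from that of R through constant coefficients. *)

Section IdealAdic.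
Variables (R : unitRingType) (I : R -> Prop).
Hypothesis I0 : I 0.
Hypothesis I_add : forall x y, I x -> I y -> I (x + y).
Hypothesis I_mull : forall a x, I x -> I (a * x).
Hypothesis I_mulr : forall a x, I x -> I (x * a).

Lemma idpowMl e a x : idpow I e x -> idpow I e (a * x).
Proof.
elim=> [y | n | n b y Ib Iy _ | n y z _ IHy _ IHz].
- exact: idpow0.
- by rewrite mulr0; apply: idpow_zero.
- by rewrite mulrA; apply: idpow_mul; first apply: I_mull.
- by rewrite mulrDr; apply: idpow_add.
Qed.

Lemma idpowMr e x a : idpow I e x -> idpow I e (x * a).
Proof.
elim=> [y | n | n b y Ib _ IHy | n y z _ IHy _ IHz].
- exact: idpow0.
- by rewrite mul0r; apply: idpow_zero.
- by rewrite -mulrA; apply: idpow_mul.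
- by rewrite mulrDl; apply: idpow_add.
Qed.

Lemma idpowN e x : idpow I e x -> idpow I e (- x).
Proof. by move=> Ix; rewrite -mulN1r; apply: idpowMl. Qed.

Lemma idpow_subC e x y : idpow I e (x - y) -> idpow I e (y - x).
Proof. by move=> Ixy; rewrite -opprB; apply: idpowN. Qed.

Lemma idpowB_trans e x y z :
  idpow I e (x - y) -> idpow I e (y - z) -> idpow I e (x - z).
Proof. by move=> Ixy Iyz; have := idpow_add Ixy Iyz; rewrite addrA subrK. Qed.

Lemma idpow_sum e (J : Type) (r : seq J) (P : pred J) (F : J -> R) :
  (forall j, P j -> idpow I e (F j)) -> idpow I e (\sum_(j <- r | P j) F j).
Proof. by apply: big_ind => //; [apply: idpow_zero | apply: idpow_add]. Qed.

Lemma idpowM e e' x y : idpow I e x -> idpow I e' y -> idpow I (e + e') (x * y).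
Proof.
move=> + Iy; elim=> [z | n | n a z Ia _ IHz | n z z' _ IHz _ IHz'].
- by rewrite add0n; apply: idpowMl.
- by rewrite mul0r; apply: idpow_zero.
- by rewrite -mulrA addSn; apply: idpow_mul.
- by rewrite mulrDl; apply: idpow_add.
Qed.

Lemma idpowS e x : idpow I e.+1 x -> idpow I e x.
Proof.
move Ee : e.+1 => e' Ix; elim: Ix e Ee => [y | n | n a y Ia Iy _ | n y z _ IHy _ IHz] e Ee.
- by [].
- exact: idpow_zero.
- by case: Ee => ->; apply: idpowMl.
- by apply: idpow_add; [apply: IHy | apply: IHz].
Qed.

Lemma idpow_le e e' x : idpow I e x -> (e' <= e)%N -> idpow I e' x.
Proof.
move=> + /subnK le_e'e; rewrite -le_e'e; elim: (e - e')%N => [|d IH] // Ix.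
by apply: IH; apply: idpowS; rewrite -addSn.
Qed.

Lemma idpow1 x : I x -> idpow I 1 x.
Proof. by move=> Ix; rewrite -[x]mulr1; apply: idpow_mul => //; apply: idpow0. Qed.

Lemma idpow1_mem x : idpow I 1 x -> I x.
Proof.
move Ee : 1%N => e Ix; elim: Ix Ee => [y | n | n a y Ia _ _ | n y z _ IHy _ IHz] Ee //.
- by apply: I_mulr.
- by apply: I_add; [apply: IHy | apply: IHz].
Qed.

Lemma idpow_rmorph (s : {rmorphism R -> R}) e x :
  (forall y, I y -> I (s y)) -> idpow I e x -> idpow I e (s x).
Proof.
move=> sI; elim=> [y | n | n a y Ia _ IHy | n y z _ IHy _ IHz].
- exact: idpow0.
- by rewrite rmorph0; apply: idpow_zero.
- by rewrite rmorphM; apply: idpow_mul; first apply: sI.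
- by rewrite rmorphD; apply: idpow_add.
Qed.

Hypothesis I_separated : adic_separated I.

Lemma adic_lim_unique u l1 l2 : adic_lim I u l1 -> adic_lim I u l2 -> l1 = l2.
Proof.
move=> u_l1 u_l2; apply/eqP; rewrite -subr_eq0; apply/eqP; apply: I_separated => k.
have [N1 lim1] := u_l1 k; have [N2 lim2] := u_l2 k.
exact: idpowB_trans (idpow_subC (lim1 _ (leq_maxl N1 N2))) (lim2 _ (leq_maxr N1 N2)).
Qed.

Section SkewSeries.
Variables (sigma : {rmorphism R -> R}) (delta : R -> R).
Hypothesis delta_der : sigma_derivation sigma delta.

Lemma sderivD x y : delta (x + y) = delta x + delta y.
Proof. by case: delta_der. Qed.

Lemma sderivM x y : delta (x * y) = delta x * y + sigma x * delta y.
Proof. by case: delta_der. Qed.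

Lemma sderiv0 : delta 0 = 0.
Proof. by apply: (@addrI _ (delta 0)); rewrite -sderivD !addr0. Qed.

Lemma sderivN x : delta (- x) = - delta x.
Proof. by apply: (@addrI _ (delta x)); rewrite -sderivD !subrr sderiv0. Qed.

Lemma sderivB x y : delta (x - y) = delta x - delta y.
Proof. by rewrite sderivD sderivN. Qed.

Lemma sderiv1 : delta 1 = 0.
Proof.
apply: (@addrI _ (delta 1)); rewrite addr0.
by rewrite -{3}[1]mulr1 sderivM rmorph1 mulr1 mul1r.
Qed.

Lemma sderiv_sum (J : Type) (r : seq J) (P : pred J) (F : J -> R) :
  delta (\sum_(j <- r | P j) F j) = \sum_(j <- r | P j) delta (F j).
Proof. exact: (big_morph delta sderivD sderiv0). Qed.

Hypothesis sigma_I : forall x, I x -> I (sigma x).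
Hypothesis delta_I : forall x, I (delta x).
Hypothesis delta_I2 : forall x, I x -> idpow I 2 (delta x).

Lemma idpow_sderiv e x : idpow I e x -> idpow I e.+1 (delta x).
Proof.
elim=> [y | n | n a y Ia Iy IHy | n y z _ IHy _ IHz].
- exact: idpow1.
- by rewrite sderiv0; apply: idpow_zero.
- rewrite sderivM; apply: idpow_add.
  + exact: (idpowM (delta_I2 Ia) Iy).
  + exact: (idpowM (idpow1 (sigma_I Ia)) IHy).
- by rewrite sderivD; apply: idpow_add.
Qed.

(* Coefficients of [X v], by [X v_t X^t = sigma(v_t) X^(t+1) + delta(v_t) X^t]. *)
Definition mulX (v : nat -> R) : nat -> R :=
  fun t => (if t is t'.+1 then sigma (v t') else 0) + delta (v t).

Definition mulXn i v := iter i mulX v.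

(* The e-th step of the (I, X)-adic filtration: v_t in I^(e-t), where the truncated
   subtraction leaves v_t unconstrained for t >= e. *)
Definition filtered e (v : nat -> R) := forall t, idpow I (e - t) (v t).

Definition head_in e n (v : nat -> R) := forall t, (t <= n)%N -> idpow I e (v t).

Definition pmul K (f v : nat -> R) t := \sum_(i < K) f i * mulXn i v t.

Lemma mulXnS i v : mulXn i.+1 v = mulX (mulXn i v).
Proof. exact: iterS. Qed.

Lemma mulXnSr i v : mulXn i.+1 v = mulXn i (mulX v).
Proof. exact: iterSr. Qed.

Lemma filtered0 v : filtered 0 v.
Proof. by move=> t; apply: idpow0. Qed.

Lemma filtered_mulX e v : filtered e v -> filtered e.+1 (mulX v).
Proof.
move=> Iv [|t]; rewrite /mulX.
- by rewrite add0r !subn0; apply: idpow_sderiv; rewrite -[e]subn0.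
- apply: idpow_add; first by rewrite subSS; apply: (idpow_rmorph sigma_I).
  by apply: (idpow_le (idpow_sderiv (Iv t.+1))); lia.
Qed.

Lemma filtered_mulXn e i v : filtered e v -> filtered (e + i) (mulXn i v).
Proof.
elim: i => [|i IH] Iv; first by rewrite addn0.
by rewrite addnS mulXnS; apply/filtered_mulX/IH.
Qed.

Lemma idpow_mulXn i v t : idpow I (i - t) (mulXn i v t).
Proof. by have := filtered_mulXn i (filtered0 v) t; rewrite add0n. Qed.

Lemma head_in_mulX e n v : head_in e n v -> head_in e n (mulX v).
Proof.
move=> Iv [|t] le_tn; rewrite /mulX.
- by rewrite add0r; apply: (idpow_le (idpow_sderiv (Iv 0%N le_tn))).
- apply: idpow_add; first by apply/(idpow_rmorph sigma_I)/Iv; lia.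
  exact: (idpow_le (idpow_sderiv (Iv _ le_tn))).
Qed.

Lemma head_in_mulXn e n i v : head_in e n v -> head_in e n (mulXn i v).
Proof. by elim: i => [|i IH] Iv //; rewrite mulXnS; apply/head_in_mulX/IH. Qed.

Lemma mulXD v w : mulX (v \+ w) = mulX v \+ mulX w.
Proof.
apply: functional_extensionality => -[|t] /=; rewrite /mulX /=.
- by rewrite !add0r sderivD.
- by rewrite rmorphD sderivD addrACA.
Qed.

Lemma mulXB v w : mulX (v \- w) = mulX v \- mulX w.
Proof.
apply: functional_extensionality => -[|t] /=; rewrite /mulX /=.
- by rewrite !add0r sderivB.
- by rewrite rmorphB sderivB opprD addrACA.
Qed.

Lemma mulXnD i v w : mulXn i (v \+ w) = mulXn i v \+ mulXn i w.
Proof. by elim: i => [|i IH] //; rewrite !mulXnS IH mulXD. Qed.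

Lemma mulXnB i v w : mulXn i (v \- w) = mulXn i v \- mulXn i w.
Proof. by elim: i => [|i IH] //; rewrite !mulXnS IH mulXB. Qed.

Lemma mulXn_xcoef i v n :
  mulXn i v n = \sum_(j < n.+1) xcoef sigma delta i (v j) (n - j).
Proof.
elim: i n => [|i IH] n.
- rewrite big_ord_recr /= subnn eqxx big1 ?add0r // => j _.
  by have := ltn_ord j; case: eqP => // /eqP; rewrite subn_eq0; lia.
- rewrite mulXnS /mulX /= big_split /= -sderiv_sum -IH; congr (_ + _).
  case: n => [|n]; first by rewrite big_ord1.
  rewrite big_ord_recr /= subnn addr0 IH rmorph_sum; apply: eq_bigr => j _.
  by rewrite subSn //; have := ltn_ord j.
Qed.

Lemma mul_psumE f g n N : mul_psum sigma delta f g n N = pmul N f g n.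
Proof. by apply: eq_bigr => i _; rewrite mulXn_xcoef mulr_sumr. Qed.

Lemma mulX_sum C (G : 'I_C -> nat -> R) t :
  mulX (fun s => \sum_(j < C) G j s) t = \sum_(j < C) mulX (G j) t.
Proof.
rewrite /mulX; case: t => [|t].
- by rewrite add0r sderiv_sum; apply: eq_bigr => j _; rewrite add0r.
- by rewrite rmorph_sum sderiv_sum -big_split.
Qed.

Lemma mulX_mull r v t : mulX (fun s => r * v s) t = sigma r * mulX v t + delta r * v t.
Proof.
rewrite /mulX; case: t => [|t].
- by rewrite sderivM !add0r addrC.
- by rewrite sderivM rmorphM mulrDr -addrA [delta r * _ + _]addrC.
Qed.

Lemma pmulD K f v w t : pmul K f (v \+ w) t = pmul K f v t + pmul K f w t.
Proof. by rewrite /pmul -big_split; apply: eq_bigr => i _; rewrite mulXnD mulrDr. Qed.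

Lemma pmulB K f v w t : pmul K f (v \- w) t = pmul K f v t - pmul K f w t.
Proof. by rewrite /pmul -sumrB; apply: eq_bigr => i _; rewrite mulXnB mulrBr. Qed.

Lemma pmul_tail K N f v t : (K <= N)%N -> idpow I (K - t) (pmul N f v t - pmul K f v t).
Proof.
elim: N => [|N IH] le_KN.
  by move: le_KN; rewrite leqn0 => /eqP ->; rewrite subrr; apply: idpow_zero.
have [lt_KN | le_NK] := ltnP K N.+1; last first.
  have -> : K = N.+1 by lia.
  by rewrite subrr; apply: idpow_zero.
rewrite /pmul big_ord_recr /= -/(pmul N f v t) addrAC; apply: idpow_add; first exact: IH.
by apply: idpowMl; apply: (idpow_le (idpow_mulXn _ _ _)); lia.
Qed.

Lemma pmul_filtered e K f v t : filtered e v -> idpow I (e - t) (pmul K f v t).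
Proof.
move=> Iv; apply: idpow_sum => i _; apply: idpowMl.
by apply: (idpow_le (filtered_mulXn i Iv t)); lia.
Qed.

Lemma is_mul_pmul f g u n k C :
  is_mul I sigma delta f g u -> (n + k <= C)%N -> idpow I k (pmul C f g n - u n).
Proof.
move=> fg_u le_nkC; have [N fg_lim] := fg_u n k.
have := fg_lim (maxn N C) (leq_maxl _ _); rewrite mul_psumE => lim_u.
have tail := pmul_tail f g n (leq_maxr N C).
have := idpow_add (idpowN (idpow_le tail _)) lim_u.
by rewrite opprB addrA subrK; apply; lia.
Qed.

(* Up to the boundary term sigma(g_(C-1)) X^C h, which vanishes modulo I^(C-n)
   in degrees t <= n, truncated right multiplication by h commutes with X. *)
Lemma pmul_mulX C g h n t : (t <= n)%N ->
  idpow I (C - n) (pmul C (mulX g) h t - mulX (pmul C g h) t).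
Proof.
move=> le_tn; rewrite /pmul (mulX_sum (fun j s => g j * mulXn j h s)).
under [X in _ - X]eq_bigr => j _ do rewrite mulX_mull -mulXnS.
rewrite /mulX -/mulX; under [X in X - _]eq_bigr => j _ do rewrite mulrDl.
rewrite big_split /= big_split /= opprD addrACA subrr addr0.
case: C => [|C]; first by rewrite !big_ord0 subrr; apply: idpow_zero.
rewrite big_ord_recl big_ord_recr /= mul0r add0r opprD addrA subrr add0r.
apply/idpowN/idpowMl; rewrite -mulXnS; apply: (idpow_le (idpow_mulXn _ _ _)); lia.
Qed.

Lemma pmul_mulXn C h n i g t : (t <= n)%N ->
  idpow I (C - n) (pmul C (mulXn i g) h t - mulXn i (pmul C g h) t).
Proof.
move=> le_tn; elim: i g => [|i IH] g; first by rewrite subrr; apply: idpow_zero.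
rewrite mulXnSr [mulXn i.+1 _]mulXnSr; apply: idpowB_trans (IH (mulX g)) _.
rewrite -[_ - _]/((mulXn i _ \- mulXn i _) t) -mulXnB.
by apply: (head_in_mulXn _ _ le_tn) => s le_sn; apply: pmul_mulX.
Qed.

Lemma is_mulA f g h u v w :
  is_mul I sigma delta f g u -> is_mul I sigma delta g h v ->
  is_mul I sigma delta u h w -> is_mul I sigma delta f v w.
Proof.
move=> fg_u gh_v uh_w n k; exists (n + k + k)%N => N le_N; rewrite mul_psumE.
set C := (n + k)%N; set A := (C + k)%N.
have fv_tail : idpow I k (pmul N f v n - pmul A f v n).
  by apply: (idpow_le (pmul_tail _ _ _ le_N)); rewrite /A /C; lia.
have uh_lim : idpow I k (pmul C u h n - w n) by apply: (is_mul_pmul uh_w).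
have fg_lim : idpow I k (pmul C (pmul A f g) h n - pmul C u h n).
  rewrite /pmul -sumrB; apply: idpow_sum => m _; rewrite -mulrBl; apply: idpowMr.
  by apply: (is_mul_pmul fg_u); have := ltn_ord m; rewrite /A /C; lia.
have f_g_h : pmul C (pmul A f g) h n = \sum_(i < A) f i * pmul C (mulXn i g) h n.
  rewrite /pmul; under eq_bigr => m _ do rewrite mulr_suml.
  rewrite exchange_big /=; apply: eq_bigr => i _; rewrite mulr_sumr.
  by apply: eq_bigr => m _; rewrite mulrA.
have f_gh : idpow I k (\sum_(i < A) f i * pmul C (mulXn i g) h n -
                       \sum_(i < A) f i * mulXn i (pmul C g h) n).
  rewrite -sumrB; apply: idpow_sum => i _; rewrite -mulrBr; apply: idpowMl.
  by have := pmul_mulXn C h i g (leqnn n); rewrite /C addKn.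
have gh_lim : idpow I k (\sum_(i < A) f i * mulXn i (pmul C g h) n - pmul A f v n).
  rewrite /pmul -sumrB; apply: idpow_sum => i _; rewrite -mulrBr; apply: idpowMl.
  rewrite -[_ - _]/((mulXn i _ \- mulXn i _) n) -mulXnB.
  by apply: (head_in_mulXn _ _ (leqnn n)) => t le_tn; apply: (is_mul_pmul gh_v); lia.
rewrite f_g_h in fg_lim.
apply: idpowB_trans fv_tail _; apply: idpowB_trans (idpow_subC gh_lim) _.
apply: idpowB_trans (idpow_subC f_gh) _; exact: idpowB_trans fg_lim uh_lim.
Qed.

Lemma mulXn_sone i : mulXn i (sone R) = fun t => if t == i then 1 else 0.
Proof.
elim: i => [|i IH]; first by apply: functional_extensionality => t.
rewrite mulXnS IH; apply: functional_extensionality => -[|t]; rewrite /mulX.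
- by rewrite add0r; case: eqP => _; rewrite ?sderiv1 ?sderiv0.
- rewrite eqSS; case: (t.+1 == i); rewrite ?sderiv1 ?sderiv0 addr0;
  by case: (t == i); rewrite ?rmorph1 ?rmorph0.
Qed.

Lemma is_mul1l h : is_mul I sigma delta (sone R) h h.
Proof.
move=> n k; exists 1%N => -[|N] // _; rewrite mul_psumE /pmul big_ord_recl big1 ?addr0.
  by rewrite /sone /= mul1r subrr; apply: idpow_zero.
by move=> i _; rewrite /sone /= mul0r.
Qed.

Lemma is_mul1r f : is_mul I sigma delta f (sone R) f.
Proof.
move=> n k; exists n.+1 => N lt_nN; rewrite mul_psumE /pmul.
under eq_bigr => i _ do rewrite mulXn_sone.
rewrite (bigD1 (Ordinal lt_nN)) //= eqxx mulr1 big1 ?addr0 ?subrr; first exact: idpow_zero.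
move=> i ne_in; case: eqP; rewrite ?mulr0 // => eq_ni.
by move: ne_in; rewrite -val_eqE /= eq_ni eqxx.
Qed.

Lemma is_mul_coef0 f g h : is_mul I sigma delta f g h -> I (f 0%N * g 0%N - h 0%N).
Proof.
move=> fg_h; apply: idpow1_mem.
by have := is_mul_pmul (n := 0) (k := 1) (C := 1) fg_h isT; rewrite /pmul big_ord1.
Qed.

Hypothesis I_complete : adic_complete I.

Section RightInverse.
Variable f : nat -> R.
Hypothesis f0_unit : f 0%N \is a GRing.unit.

Fixpoint rinv_approx k : nat -> R :=
  if k is k'.+1 then
    let g := rinv_approx k' in g \+ (fun t => (f 0%N)^-1 * (sone R t - pmul k f g t))
  else szero R.

Definition rinv_defect k t := sone R t - pmul k.+1 f (rinv_approx k) t.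

Lemma pmul_scale_coef0 k w t :
  pmul k.+1 f (fun s => (f 0%N)^-1 * w s) t =
  w t + \sum_(i < k) f i.+1 * mulXn i.+1 (fun s => (f 0%N)^-1 * w s) t.
Proof. by rewrite /pmul big_ord_recl /= mulrA mulrV // mul1r. Qed.

Lemma filtered_rinv_defect k : filtered k (rinv_defect k).
Proof.
elim: k => [|k IH]; first exact: filtered0.
set c := fun s => (f 0%N)^-1 * rinv_defect k s.
have Ic : filtered k c by move=> s; apply/idpowMl/IH.
move=> t; rewrite /rinv_defect [pmul k.+2 _ _ _]/pmul big_ord_recr /= -/(pmul k.+1 f _ t).
rewrite -mulXnS pmulD pmul_scale_coef0 -/(rinv_defect k t) /rinv_defect.
set P := pmul _ _ _ t; set T1 := \sum_(i < k) _; set T2 := _ * _.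
have -> : sone R t - (P + (sone R t - P + T1) + T2) = - (T1 + T2).
  by rewrite addrA [P + _]addrC subrK -addrA opprD addrA subrr add0r.
apply/idpowN/idpow_add.
- apply: idpow_sum => i _; apply: idpowMl.
  by apply: (idpow_le (filtered_mulXn i.+1 Ic t)); lia.
- by apply/idpowMl/idpow_mulXn.
Qed.

Lemma rinv_approx_sub q p t : (q <= p)%N ->
  idpow I (q - t) (rinv_approx p t - rinv_approx q t).
Proof.
elim: p => [|p IH] le_qp.
  by move: le_qp; rewrite leqn0 => /eqP ->; rewrite subrr; apply: idpow_zero.
have [lt_qp | le_pq] := ltnP q p.+1; last first.
  have -> : q = p.+1 by lia.
  by rewrite subrr; apply: idpow_zero.
apply: idpowB_trans (IH _) => /=; last by lia.
rewrite addrAC subrr add0r; apply: idpowMl.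
by apply: (idpow_le (filtered_rinv_defect p t)); lia.
Qed.

Lemma rinv_approx_cauchy t : adic_cauchy I (fun k => rinv_approx k t).
Proof.
move=> k; exists (t + k)%N => p q le_p le_q.
have le_k : (k <= t + k - t)%N by lia.
apply: idpowB_trans (idpow_le (rinv_approx_sub t le_p) le_k) _.
exact: idpow_le (idpow_subC (rinv_approx_sub t le_q)) le_k.
Qed.

Definition rinv t : R :=
  proj1_sig (constructive_indefinite_description _ (I_complete (rinv_approx_cauchy t))).

Lemma rinv_approx_lim t : adic_lim I (fun k => rinv_approx k t) (rinv t).
Proof. by rewrite /rinv; case: constructive_indefinite_description. Qed.

Lemma rinv_approx_close k t : idpow I (k - t) (rinv t - rinv_approx k t).
Proof.
have [N lim_N] := rinv_approx_lim t (k - t)%N.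
exact: idpowB_trans (idpow_subC (lim_N _ (leq_maxl N k))) (rinv_approx_sub t (leq_maxr N k)).
Qed.

Lemma is_mul_rinv : is_mul I sigma delta f rinv (sone R).
Proof.
move=> n l; exists (n + l).+1 => N le_N; rewrite mul_psumE.
set k := (n + l)%N; have -> : l = (k - n)%N by rewrite /k addKn.
have close : idpow I (k - n) (pmul N f rinv n - pmul N f (rinv_approx k) n).
  by rewrite -pmulB; apply: pmul_filtered => t; apply: rinv_approx_close.
have tail : idpow I (k - n) (pmul N f (rinv_approx k) n - pmul k.+1 f (rinv_approx k) n).
  by apply: (idpow_le (pmul_tail _ _ _ le_N)); lia.
apply: idpowB_trans close (idpowB_trans tail _).
exact: idpow_subC (filtered_rinv_defect k n).
Qed.

End RightInverse.

Lemma exists_rinv f : f 0%N \is a GRing.unit -> exists g, is_mul I sigma delta f g (sone R).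
Proof. by move=> Uf0; exists (rinv Uf0); apply: is_mul_rinv. Qed.

End SkewSeries.
End IdealAdic.

Section LocalRing.
Variable R : unitRingType.
Hypothesis R_local : local_ring R.

Lemma nonunit0 : nonunit (0 : R).
Proof. by case: R_local => _ []. Qed.

Lemma nonunitD (x y : R) : nonunit x -> nonunit y -> nonunit (x + y).
Proof. by case: R_local => _ [_ [nonunit_add _]]; apply: nonunit_add. Qed.

Lemma nonunitMl (a x : R) : nonunit x -> nonunit (a * x).
Proof. by case: R_local => _ [_ [_ nonunit_mul]] nx; case: (nonunit_mul a x nx). Qed.

Lemma nonunitMr (a x : R) : nonunit x -> nonunit (x * a).
Proof. by case: R_local => _ [_ [_ nonunit_mul]] nx; case: (nonunit_mul a x nx). Qed.

Lemma unitr_nonunitB (x y : R) : nonunit (x - y) -> (x \is a GRing.unit) = (y \is a GRing.unit).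
Proof.
have nonunit_subr (a b : R) : nonunit (a - b) -> nonunit b -> nonunit a.
  by move=> nab nb; rewrite -(subrK b a); apply: nonunitD.
move=> nxy; apply/idP/idP => U; apply/negPn/negP => /negP nU.
- exact: (nonunit_subr _ _ nxy nU).
- have nyx : nonunit (y - x) by rewrite -opprB -mulN1r; apply: nonunitMl.
  exact: (nonunit_subr _ _ nyx nU).
Qed.

Lemma unitrM_local (x y : R) :
  x * y \is a GRing.unit -> x \is a GRing.unit /\ y \is a GRing.unit.
Proof.
move=> Uxy; split; apply/negPn/negP => /negP nU.
- exact: (nonunitMr nU Uxy).
- exact: (nonunitMl nU Uxy).
Qed.

End LocalRing.

Section LocalSkewSeries.
Variables (R : unitRingType) (sigma : {rmorphism R -> R}) (delta : R -> R).
Local Notation m := (@nonunit R).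
Hypothesis R_local : local_ring R.
Hypothesis m_complete : adic_complete m.
Hypothesis m_separated : adic_separated m.
Hypothesis sigma_m : forall x, m x -> m (sigma x).
Hypothesis delta_der : sigma_derivation sigma delta.
Hypothesis delta_m : forall x, m (delta x).
Hypothesis delta_m2 : forall x, m x -> idpow m 2 (delta x).

Let m0 := nonunit0 R_local.
Let m_add := nonunitD R_local.
Let m_mull := nonunitMl R_local.
Let m_mulr := nonunitMr R_local.
Let exists_rinv_m := exists_rinv m_mull delta_der sigma_m delta_m delta_m2 m_complete.

Lemma is_mul_unit0 f g h : is_mul m sigma delta f g h ->
  (h 0%N \is a GRing.unit) = (f 0%N * g 0%N \is a GRing.unit).
Proof.
move=> fg_h; apply/esym/(unitr_nonunitB R_local).
exact: (is_mul_coef0 m0 m_add m_mull m_mulr delta_der sigma_m delta_m delta_m2 fg_h).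
Qed.

Lemma sunitP f : sunit m sigma delta f <-> f 0%N \is a GRing.unit.
Proof.
split=> [[g [fg1 _]] | Uf0].
  by have := is_mul_unit0 fg1; rewrite /sone /= unitr1 => /esym/(unitrM_local R_local)[].
have [g fg1] := exists_rinv_m Uf0.
have Ug0 : g 0%N \is a GRing.unit.
  by have := is_mul_unit0 fg1; rewrite /sone /= unitr1 => /esym/(unitrM_local R_local)[].
have [h gh1] := exists_rinv_m Ug0.
have f1h := is_mulA m_mull delta_der sigma_m delta_m delta_m2 fg1 gh1 (is_mul1l m delta_der h).
have eq_hf : h = f.
  apply: functional_extensionality => n.
  exact: (adic_lim_unique m_mull m_separated (f1h n) (is_mul1r m delta_der f n)).
by rewrite eq_hf in gh1; exists g.
Qed.

Lemma skew_local_series : skew_local m sigma delta.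
Proof.
have nonunit_coef0 f : ~ sunit m sigma delta f -> m (f 0%N).
  by move=> nf Uf0; apply/nf/sunitP.
split; first by apply/sunitP; rewrite /sone /= unitr1.
split; first by move/sunitP; apply: m0.
split; first by move=> f g /nonunit_coef0 nf /nonunit_coef0 ng /sunitP; apply: m_add.
split=> a f h /nonunit_coef0 nf /is_mul_unit0 Uh /sunitP; rewrite Uh.
- exact: m_mull.
- exact: m_mulr.
Qed.

End LocalSkewSeries.

Theorem mainTheorem7 (R : unitRingType) (sigma : {rmorphism R -> R}) (delta : R -> R) :
  local_ring R ->
  adic_complete (@nonunit R) -> adic_separated (@nonunit R) ->
  (forall x, nonunit x -> nonunit (sigma x)) ->
  sigma_derivation sigma delta ->
  (forall x, nonunit (delta x)) ->
  (forall x, nonunit x -> idpow (@nonunit R) 2 (delta x)) ->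
  (forall f : nat -> R, sunit (@nonunit R) sigma delta f <-> f 0%N \is a GRing.unit) /\
  skew_local (@nonunit R) sigma delta.
Proof.
move=> R_local m_complete m_separated sigma_m delta_der delta_m delta_m2; split.
- by move=> f; apply: sunitP.
- exact: skew_local_series.
Qed.
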